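(* Let $A$, $B$ and $\psi$ be complex $D\times D$ matrices, where $\psi=\mathrm{diag}(\mu_1,\dots,\mu_D)$ is diagonal with $0\le\mu_1\le\mu_2\le\dots\le\mu_D$. For $1\le n\le D$ let $\psi_n=\mathrm{diag}(\mu_1,\dots,\mu_n,0,\dots,0)$. Then $$\chi_n(A\psi BB^\dagger\psi^\dagger A^\dagger)\le\mathrm{Tr}(A\psi_nBB^\dagger\psi_n^\dagger A^\dagger).$$
   Context: For a Hermitian $D\times D$ matrix $T$, $\chi_n(T)$ denotes the sum of its $n$ smallest eigenvalues counted with multiplicity. *)

From HB Require Import structures.
From mathcomp Require Import all_boot all_order all_algebra.
Set Implicit Arguments. Unset Strict Implicit. Unset Printing Implicit Defensive.
Import Order.TTheory GRing.Theory Num.Theory.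
Local Open Scope ring_scope.

Definition adjmx (C : numClosedFieldType) (m n : nat) (A : 'M[C]_(m, n)) : 'M[C]_(n, m) :=
  (map_mx Num.conj A)^T.

(* the eigenvalues of T counted with multiplicity: the roots (with
   multiplicity) of the characteristic polynomial, which splits over C *)
Definition eigvals (C : numClosedFieldType) (D : nat) (T : 'M[C]_D) : seq C :=
  sval (closed_field_poly_normal (char_poly T)).

(* chi_n(T) = sum of the n smallest eigenvalues (with multiplicity);
   meaningful for Hermitian T, whose eigenvalues are real, hence totally ordered *)
Definition chi (C : numClosedFieldType) (D : nat) (n : nat) (T : 'M[C]_D) : C :=
  \sum_(x <- take n (sort (fun x y : C => x <= y) (eigvals T))) x.

From HB Require Import structures.
From mathcomp Require Import all_boot all_order all_algebra.
From mathcomp Require Import ring.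
Import Order.TTheory GRing.Theory Num.Theory.
Local Open Scope ring_scope.

(* Proof idea: Ky Fan's minimum principle combined with a rank argument.
   Write M = A psi B and Y = A psi_n B; the two sides of the theorem are
   chi_n(M M^+) and tr(Y Y^+).  Since M - Y = A (psi - psi_n) B has rank at
   most D - n, its row kernel has dimension at least n, so there is a matrix
   Q with r >= n orthonormal rows (Q Q^+ = 1) killing it, i.e. Q M = Q Y.
   1. (Ky Fan) chi_n(M M^+) <= tr(Q M M^+ Q^+).  Diagonalising
      M M^+ = V^+ diag(d) V gives tr(Q M M^+ Q^+) = sum_i d_i w_i with weights
      w_i = (R^+ R)_ii, R = Q V^+, lying in [0,1] and summing to r; such a
      weighted sum of nonnegative numbers dominates the sum of the n smallest
      of them, an order-theoretic fact proved first (section SmallestSum).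
   2. (Compression) tr(Q Y (Q Y)^+) <= tr(Y Y^+), because 1 - Q^+ Q is an
      orthogonal projection (section Adjoint).
   Hence chi_n(M M^+) <= tr(Q M (Q M)^+) = tr(Q Y (Q Y)^+) <= tr(Y Y^+). *)

Set Implicit Arguments.
Unset Strict Implicit.
Unset Printing Implicit Defensive.

Section SmallestSum.
Variable R : numDomainType.

Definition shortfall (c x : R) : R := if x <= c then x - c else 0.

Lemma shortfall_weighted (c x w : R) :
  0 <= c -> 0 <= x -> 0 <= w -> w <= 1 -> c * w + shortfall c x <= x * w.
Proof.
move=> c0 x0 w0 w1; rewrite /shortfall; case: ifP => [xc|xc].
  rewrite -subr_ge0.
  have -> : x * w - (c * w + (x - c)) = (c - x) * (1 - w) by ring.
  by apply: mulr_ge0; rewrite subr_ge0.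
have cx : c < x by rewrite real_ltNge ?xc ?ger0_real.
by rewrite addr0 ler_wpM2r // ltW.
Qed.

Lemma sum_take_sorted (t : seq R) (n : nat) :
  sorted <=%R t -> (1 <= n)%N -> (n <= size t)%N ->
  let c := nth 0 t n.-1 in
  \sum_(x <- take n t) x = c * n%:R + \sum_(x <- t) shortfall c x.
Proof.
move=> st n1 nt c.
have le_c x : x \in take n t -> x <= c.
  move=> /(nthP 0) [j]; rewrite size_takel // => jn <-.
  rewrite nth_take //; apply: (sorted_leq_nth le_trans lexx) => //.
  - by rewrite inE (leq_trans jn).
  - by rewrite inE prednK.
  - by rewrite -ltnS prednK.
have ge_c x : x \in drop n t -> c <= x.
  move=> /(nthP 0) [j]; rewrite size_drop => jt <-.
  rewrite nth_drop; apply: (sorted_leq_nth le_trans lexx) => //.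
  - by rewrite inE prednK.
  - by rewrite inE -ltn_subRL.
  - by rewrite (leq_trans (leq_pred n)) // leq_addr.
rewrite -[in RHS](cat_take_drop n t) big_cat /=.
rewrite [X in _ + (_ + X)]big1_seq ?addr0; last first.
  move=> x /andP [_ xt]; rewrite /shortfall; case: ifP => // xc.
  by rewrite (@le_anti _ _ x c) ?subrr // xc ge_c.
rewrite [X in _ = _ + X](eq_big_seq (fun x => x - c)); last first.
  by move=> x xt; rewrite /shortfall le_c.
rewrite sumrB big_const_seq count_predT size_takel // iter_addr_0.
by rewrite mulr_natr addrC subrK.
Qed.

Lemma sum_smallest_le_weighted (D n : nat) (e : seq R) (d w : 'I_D -> R) :
  (1 <= n)%N -> (n <= D)%N -> perm_eq e [seq d i | i <- enum 'I_D] ->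
  (forall i, 0 <= d i) -> (forall i, 0 <= w i) -> (forall i, w i <= 1) ->
  n%:R <= \sum_i w i ->
  \sum_(x <- take n (sort (fun x y : R => x <= y) e)) x <= \sum_i d i * w i.
Proof.
move=> n1 nD ed d0 w0 w1 wn.
set t := sort _ e.
have te : perm_eq t e by apply/permPl; exact: perm_sort.
have td : perm_eq t [seq d i | i <- enum 'I_D] by apply: perm_trans te ed.
have t0 x : x \in t -> 0 <= x by rewrite (perm_mem td) => /mapP [i _ ->].
have st : sorted <=%R t.
  apply: (sort_sorted_in (P := [pred x : R | 0 <= x])).
    by move=> x y x0 y0; apply: real_leVge; apply: ger0_real.
  by apply/allP => x; rewrite -(perm_mem te); apply: t0.
have tD : size t = D by rewrite (perm_size td) size_map size_enum_ord.
rewrite sum_take_sorted ?tD //; set c := nth 0 t n.-1.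
have c0 : 0 <= c by apply/t0/mem_nth; rewrite tD prednK.
apply: le_trans (ler_sum _ (fun i _ => shortfall_weighted c0 (d0 i) (w0 i) (w1 i))) .
rewrite big_split /= -mulr_sumr (perm_big _ td) big_map big_enum /=.
by rewrite lerD2r ler_wpM2l.
Qed.

End SmallestSum.

Lemma diag_prefix_pid (R : pzRingType) (D n : nat) (mu : 'rV[R]_D) :
  diag_mx (\row_(i < D) (if (i < n)%N then mu 0 i else 0))
  = pid_mx n *m diag_mx mu.
Proof.
apply/matrixP => i j; rewrite mul_mx_diag !mxE.
case: (eqVneq i j) => [<-|ij]; first by rewrite eqxx /=; case: (i < n)%N; rewrite mulr1n ?mul1r ?mul0r.
by rewrite (inj_eq val_inj) (negbTE ij) /= mulr0n mul0r.
Qed.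

Section Adjoint.
Variable C : numClosedFieldType.

Lemma adjmxM m n p (A : 'M[C]_(m, n)) (B : 'M[C]_(n, p)) :
  adjmx (A *m B) = adjmx B *m adjmx A.
Proof. by rewrite /adjmx map_mxM trmx_mul. Qed.

Lemma adjmxK m n (A : 'M[C]_(m, n)) : adjmx (adjmx A) = A.
Proof. by apply/matrixP => i j; rewrite !mxE conjCK. Qed.

Lemma adjmxB m n (A B : 'M[C]_(m, n)) : adjmx (A - B) = adjmx A - adjmx B.
Proof. by apply/matrixP => i j; rewrite !mxE rmorphB. Qed.

Lemma adjmx1 n : adjmx (1%:M : 'M[C]_n) = 1%:M.
Proof. by rewrite /adjmx map_scalar_mx rmorph1 tr_scalar_mx. Qed.

(* adjmx agrees with the conjugate transpose M ^t* of the spectral library. *)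
Lemma trmxC_adjmx m n (A : 'M[C]_(m, n)) : map_mx Num.conj A^T = adjmx A.
Proof. by apply/matrixP => i j; rewrite !mxE. Qed.

(* The diagonal of a Gram matrix consists of squared norms of rows. *)
Lemma gram_diag_ge0 m n (A : 'M[C]_(m, n)) i : 0 <= (A *m adjmx A) i i.
Proof. by rewrite mxE; apply: sumr_ge0 => k _; rewrite !mxE mul_conjC_ge0. Qed.

Lemma cogram_diag_ge0 m n (A : 'M[C]_(m, n)) i : 0 <= (adjmx A *m A) i i.
Proof. by have := gram_diag_ge0 (adjmx A) i; rewrite adjmxK. Qed.

Lemma cogram_trace_ge0 m n (A : 'M[C]_(m, n)) : 0 <= \tr (adjmx A *m A).
Proof. by apply: sumr_ge0 => i _; apply: cogram_diag_ge0. Qed.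

Section Coisometry.
(* Q has orthonormal rows, so Q^+ Q is the orthogonal projection onto them. *)
Variables (r n : nat) (Q : 'M[C]_(r, n)).
Hypothesis QQ : Q *m adjmx Q = 1%:M.

Lemma compl_proj_gram :
  1%:M - adjmx Q *m Q = adjmx (1%:M - adjmx Q *m Q) *m (1%:M - adjmx Q *m Q).
Proof.
have idem : adjmx Q *m Q *m (adjmx Q *m Q) = adjmx Q *m Q.
  by rewrite mulmxA -(mulmxA _ Q) QQ mulmx1.
rewrite adjmxB adjmx1 adjmxM adjmxK mulmxBl !mulmxBr !mul1mx !mulmx1 idem.
by rewrite subrr oppr0 addr0.
Qed.

Lemma coisometry_diag_le1 i : (adjmx Q *m Q) i i <= 1.
Proof.
have := cogram_diag_ge0 (1%:M - adjmx Q *m Q) i.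
by rewrite -compl_proj_gram !mxE eqxx mulr1n subr_ge0.
Qed.

Lemma coisometry_trace : \tr (adjmx Q *m Q) = r%:R.
Proof. by rewrite mxtrace_mulC QQ mxtrace1. Qed.

Lemma trace_compression m (Y : 'M[C]_(n, m)) :
  \tr (Q *m Y *m adjmx (Q *m Y)) <= \tr (Y *m adjmx Y).
Proof.
set P := 1%:M - adjmx Q *m Q.
have PY : adjmx (P *m Y) *m (P *m Y) = adjmx Y *m P *m Y.
  by rewrite adjmxM mulmxA -(mulmxA (adjmx Y)) -compl_proj_gram.
rewrite mxtrace_mulC [\tr (Y *m _)]mxtrace_mulC -subr_ge0 -raddfB /=.
have -> : adjmx Y *m Y - adjmx (Q *m Y) *m (Q *m Y) = adjmx (P *m Y) *m (P *m Y).
  by rewrite PY adjmxM mulmxBr mulmx1 mulmxBl !mulmxA.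
exact: cogram_trace_ge0.
Qed.

End Coisometry.
End Adjoint.

Section Spectral.
Variable C : numClosedFieldType.

Lemma char_poly_similar n (V X : 'M[C]_n) : V \in unitmx ->
  char_poly (invmx V *m X *m V) = char_poly X.
Proof.
move=> Vu; rewrite /char_poly /char_poly_mx.
have VV : map_mx polyC (invmx V) *m map_mx polyC V = 1%:M.
  by rewrite -map_mxM mulVmx // map_scalar_mx.
have -> : 'X%:M - map_mx polyC (invmx V *m X *m V) =
    map_mx polyC (invmx V) *m ('X%:M - map_mx polyC X) *m map_mx polyC V.
  rewrite mulmxBr mulmxBl !map_mxM; congr (_ - _).
  by rewrite mul_mx_scalar -scalemxAl VV -mul_mx_scalar mul1mx.
by rewrite !det_mulmx mulrAC -det_mulmx VV det1 mul1r.
Qed.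

Lemma eigvals_diagonalized n (T V : 'M[C]_n) (d : 'rV[C]_n) : V \in unitmx ->
  T = invmx V *m diag_mx d *m V ->
  perm_eq (eigvals T) [seq d 0 i | i <- enum 'I_n].
Proof.
move=> Vu ->; rewrite /eigvals; case: closed_field_poly_normal => s /= Ts.
apply: prod_XsubC_eq.
move: Ts; rewrite (monicP (char_poly_monic _)) scale1r => <-.
rewrite char_poly_similar // char_poly_trig ?diag_mx_is_trig // big_map big_enum /=.
by apply: eq_bigr => i _; rewrite mxE eqxx mulr1n.
Qed.

Lemma chi_le_compression D r n (M : 'M[C]_D) (Q : 'M[C]_(r, D)) :
  (1 <= n)%N -> (n <= D)%N -> (n <= r)%N -> Q *m adjmx Q = 1%:M ->
  chi n (M *m adjmx M) <= \tr (Q *m (M *m adjmx M) *m adjmx Q).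
Proof.
move=> n1 nD nr QQ; set T := M *m adjmx M.
have Tn : T \is normalmx.
  by apply/normalmxP; rewrite trmxC_adjmx /T adjmxM adjmxK.
set V := spectralmx T; set d := spectral_diag T.
have eT : T = invmx V *m diag_mx d *m V by apply/orthomx_spectralP.
have iV : invmx V = adjmx V.
  by rewrite invmx_unitary ?spectral_unitarymx // trmxC_adjmx.
have VV : V *m adjmx V = 1%:M by rewrite -iV mulmxV ?spectral_unit.
have VV' : adjmx V *m V = 1%:M by rewrite -iV mulVmx ?spectral_unit.
have d0 i : 0 <= d 0 i.
  have VTV : V *m T *m adjmx V = diag_mx d.
    by rewrite eT iV !mulmxA VV mul1mx -mulmxA VV mulmx1.
  have := gram_diag_ge0 (V *m M) i.
  by rewrite adjmxM mulmxA -(mulmxA V M) VTV mxE eqxx mulr1n.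
set R := Q *m adjmx V.
have RR : R *m adjmx R = 1%:M.
  by rewrite /R adjmxM adjmxK mulmxA -(mulmxA Q) VV' mulmx1.
have -> : \tr (Q *m T *m adjmx Q) = \sum_i d 0 i * (adjmx R *m R) i i.
  have -> : Q *m T *m adjmx Q = R *m (diag_mx d *m adjmx R).
    by rewrite eT iV /R adjmxM adjmxK !mulmxA.
  rewrite mxtrace_mulC -mulmxA mul_diag_mx; apply: eq_bigr => i _.
  by rewrite mxE.
apply: sum_smallest_le_weighted => //.
- exact: eigvals_diagonalized (spectral_unit T) eT.
- by move=> i; apply: cogram_diag_ge0.
- exact: coisometry_diag_le1.
- by rewrite -/(\tr _) coisometry_trace // ler_nat.
Qed.

(* A matrix of rank at most D - n is annihilated by some r >= n orthonormal
   rows, namely an orthonormal basis of its row kernel. *)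
Lemma orthonormal_kernel D m n (Z : 'M[C]_(D, m)) : (n + \rank Z <= D)%N ->
  exists r (Q : 'M[C]_(r, D)), [/\ (n <= r)%N, Q *m adjmx Q = 1%:M & Q *m Z = 0].
Proof.
move=> nZ; set K := kermx Z.
exists (\rank K), (schmidt (row_base K)); split.
- by rewrite mxrank_ker -(leq_add2r (\rank Z)) subnK ?rank_leq_row.
- have /unitarymxP := schmidt_unitarymx (row_base K) (rank_leq_col K).
  by rewrite trmxC_adjmx.
- apply/sub_kermxP; rewrite (eqmx_schmidt_free (row_base_free K)).
  by rewrite eq_row_base submx_refl.
Qed.

End Spectral.

Unset Implicit Arguments.

Theorem lemma1 (C : numClosedFieldType) (D : nat) (A B : 'M[C]_D) (mu : 'rV[C]_D)
  (hmu0 : forall i : 'I_D, 0 <= mu 0 i)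
  (hmon : forall i j : 'I_D, (i <= j)%N -> mu 0 i <= mu 0 j)
  (n : nat) (hn1 : (1 <= n)%N) (hnD : (n <= D)%N) :
  let psi := diag_mx mu in
  let psin := diag_mx (\row_(i < D) (if (i < n)%N then mu 0 i else 0)) in
  chi n (A *m psi *m B *m adjmx B *m adjmx psi *m adjmx A)
    <= \tr (A *m psin *m B *m adjmx B *m adjmx psin *m adjmx A).
Proof.
cbv zeta; set psi := diag_mx mu; set psin := diag_mx (\row_(i < D) _).
have gramE (X : 'M[C]_D) : A *m X *m B *m adjmx B *m adjmx X *m adjmx A
    = A *m X *m B *m adjmx (A *m X *m B).
  by rewrite !adjmxM !mulmxA.
rewrite !gramE; set M := A *m psi *m B; set Y := A *m psin *m B.
set Z := A *m (copid_mx n *m psi) *m B.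
have MYZ : M = Y + Z.
  rewrite /M /Y /Z -mulmxDl -mulmxDr /psin diag_prefix_pid /copid_mx.
  by rewrite mulmxBl mul1mx addrC subrK.
have rankZ : (n + \rank Z <= D)%N.
  have rankZ_le : (\rank Z <= D - n)%N.
    rewrite -(rank_copid_mx C hnD) (leq_trans (mxrankM_maxl _ B)) //.
    by rewrite (leq_trans (mxrankM_maxr A _)) // mxrankM_maxl.
  by rewrite -(leq_add2l n) subnKC in rankZ_le.
have [r [Q [nr QQ QZ]]] := orthonormal_kernel rankZ.
have QM : Q *m M = Q *m Y by rewrite MYZ mulmxDr QZ addr0.
apply: le_trans (chi_le_compression M hn1 hnD nr QQ) _.
by rewrite mulmxA -mulmxA -adjmxM QM trace_compression.
Qed.
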